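(* Let $a_n$ denote the size of the smallest string attractor of the length-$n$ prefix $\mathbf{t}[0..n-1]$ of the Thue–Morse word $\mathbf{t}$. Then $$a_n=\begin{cases}1,& n=1;\\ 2,& 2\le n\le 6;\\ 3,& 7\le n\le 14 \text{ or } 17\le n\le 24;\\ 4,& n\in\{15,16\}\text{ or } n\ge 25.\end{cases}$$
   Context: The Thue–Morse word $\mathbf{t}=0110100110010110\cdots$ is the infinite fixed point, starting with $0$, of the morphism $\mu$ with $0\mapsto 01$, $1\mapsto 10$; it is indexed starting at $0$. A string attractor of a finite word $w=w[0..n-1]$ is a set $S\subseteq\{0,\ldots,n-1\}$ such that every nonempty factor $f$ of $w$ has an occurrence $w[p..q]=f$ with $p\le i\le q$ for some $i\in S$. *)

From mathcomp Require Import all_boot.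
Set Implicit Arguments. Unset Strict Implicit. Unset Printing Implicit Defensive.

Definition mu (s : seq nat) : seq nat :=
  flatten [seq (if x == 0 then [:: 0; 1] else [:: 1; 0]) | x <- s].

(* mu^(k+1)(0) has length 2^(k+1) > k and each mu^j(0) is a prefix of
   mu^(j+1)(0), so the k-th letter of the fixed point t = lim mu^j(0)
   is the k-th letter of mu^(k+1)(0). Indexing starts at 0. *)
Definition tm (k : nat) : nat := nth 0 (iter k.+1 mu [:: 0]) k.

Definition tm_prefix (n : nat) : seq nat := mkseq tm n.

Definition slice (w : seq nat) (p l : nat) : seq nat := take l (drop p w).

Definition is_string_attractor (n : nat) (w : seq nat) (S : {set 'I_n}) : Prop :=
  forall p l, 0 < l -> p + l <= n ->
    exists p', p' + l <= n /\ slice w p' l = slice w p l /\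
      exists i : 'I_n, i \in S /\ p' <= i < p' + l.

Definition a_claimed (n : nat) : nat :=
  if n == 1 then 1
  else if n <= 6 then 2
  else if (n <= 14) || ((17 <= n) && (n <= 24)) then 3
  else 4.

(* Since t = mu(t), t[2i] = t[i] and t[2i+1] = 1 - t[i].  Say that S
   d-spans t[0..m) if every factor of length > d has an occurrence containing s, ..., s+d
   for some s in S.  If S 0- and 1-spans t[0..m) for every m in [L, R], then the positions
   2s+1 do so for every n in [2L, 2R]: a factor of t[0..n) sits inside mu(u) for a factor u
   of t[0..ceil(n/2)), and the image of an occurrence of u through s contains 2s+1 (a parent
   u of length 1 is handled through the squares 00 and 11 of t[0..7) instead).  Three sets
   of four positions, checked by computation on [26, 52], thus give attractors of size 4 of
   every prefix of length n >= 26; below 26 the attractors are explicit.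
   Lower bounds.  For n < 60 a search shows that no a_n - 1 positions meet, for every factor
   of length at most 6, the union of its occurrences.  For n >= 60 the prefix has 40 distinct
   factors of length 13, while each position lies in only 13 windows of length 13. *)

From mathcomp Require Import all_boot zify.
Set Implicit Arguments. Unset Strict Implicit. Unset Printing Implicit Defensive.

Definition tm_block (j : nat) : seq nat := iter j mu [:: 0].

Lemma mu_cat s r : mu (s ++ r) = mu s ++ mu r.
Proof. by rewrite /mu map_cat flatten_cat. Qed.

Lemma size_mu s : size (mu s) = (size s).*2.
Proof. by elim: s => [|x s IH] //=; rewrite size_cat IH; case: (x == 0). Qed.

Lemma mu_binary s : all (fun x => x <= 1) (mu s).
Proof. by elim: s => [|x s IH] //=; rewrite all_cat IH andbT; case: (x == 0). Qed.

Lemma nth_mu s i (b : bool) : i < size s ->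
  nth 0 (mu s) (i.*2 + b) = if b then nth 0 s i == 0 else nth 0 s i != 0.
Proof.
elim: s i => [|x s IH] [|i] //= i_lt; rewrite {1}/mu /= -/(mu s).
- by case: b {IH}; case: (x == 0).
- by rewrite doubleS !addSn; case: (x == 0) => /=; exact: IH.
Qed.

Lemma size_tm_block j : size (tm_block j) = 2 ^ j.
Proof. by elim: j => [|j IH] //; rewrite /tm_block iterS size_mu -/(tm_block j) IH expnS mul2n. Qed.

Lemma prefix_tm_block j k : j <= k -> prefix (tm_block j) (tm_block k).
Proof.
move=> /subnK <-; elim: (k - j) => [|d IH]; first exact: prefix_refl.
apply: prefix_trans IH _; rewrite addSn.
elim: (d + j) => [|i /prefixP [u IH]] //; apply/prefixP; exists (mu u).
by rewrite /tm_block iterS -/(tm_block i.+1) {1}IH mu_cat.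
Qed.

Lemma tmE j i : i < 2 ^ j -> tm i = nth 0 (tm_block j) i.
Proof.
have nth_tm_block k l : k <= l -> i < 2 ^ k -> nth 0 (tm_block l) i = nth 0 (tm_block k) i.
  by move=> /prefix_tm_block /prefixP [u ->] i_lt; rewrite nth_cat size_tm_block i_lt.
move=> i_lt; rewrite /tm -/(tm_block i.+1) -(nth_tm_block i.+1 (maxn j i.+1)) ?leq_maxr //.
  by rewrite (nth_tm_block j) ?leq_maxl.
by apply: ltnW; apply: ltn_expl.
Qed.

Lemma tm_binary i : tm i <= 1.
Proof.
rewrite /tm iterS; case: (ltnP i (size (mu (iter i mu [:: 0])))) => [i_lt | ?]; last by rewrite nth_default.
exact: (allP (mu_binary _) _ (mem_nth 0 i_lt)).
Qed.

Lemma tm_double i (b : bool) : tm (i.*2 + b) = if b then 1 - tm i else tm i.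
Proof.
have i_lt : i < 2 ^ i by apply: ltn_expl.
rewrite (tmE (j := i.+1)); last by rewrite expnS mul2n; case: b; lia.
rewrite /tm_block iterS nth_mu -/(tm_block i) ?size_tm_block // -tmE //.
by case: b; have := tm_binary i; case: (tm i) => [|[]].
Qed.

Lemma tm_even i : tm i.*2 = tm i.
Proof. by rewrite -[i.*2]addn0 (tm_double i false). Qed.

Lemma tm_odd i : tm i.*2.+1 = 1 - tm i.
Proof. by rewrite -addn1 (tm_double i true). Qed.

Definition tm_occurrence (n q p l : nat) : Prop :=
  q + l <= n /\ forall i, i < l -> tm (q + i) = tm (p + i).

(* For d = 0 this is the string-attractor property of t[0..n); d = 1 is the stronger
   property that survives doubling. *)
Definition span_attractor (d n : nat) (S : seq nat) : Prop :=
  forall p l, d < l -> p + l <= n ->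
    exists q s, [/\ tm_occurrence n q p l, s \in S, q <= s & s + d < q + l].

Lemma tm_factor_double q p k :
    (forall i, i < k -> tm (q + i) = tm (p + i)) ->
  forall i, i < k.*2 -> tm (q.*2 + i) = tm (p.*2 + i).
Proof.
move=> eq_qp i i_lt; rewrite -[i](odd_double_half i) addnCA [p.*2 + _]addnCA.
by rewrite -!doubleD ![odd i + _]addnC !tm_double eq_qp // ltn_half_double.
Qed.

Lemma tm_occurrence_double m n q p k l b c :
    tm_occurrence m q p k -> b <= 1 -> c <= 1 -> m.*2 <= n + c -> l + b + c = k.*2 ->
  tm_occurrence n (q.*2 + b) (p.*2 + b) l.
Proof.
move=> [qk_le eq_qp] b_le c_le m_le l_eq; split; first lia.
by move=> i i_lt; rewrite -!addnA; apply: (tm_factor_double eq_qp); lia.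
Qed.

(* With x = 1 - y, mu(yy) = yxyx contains mu(x) = xy at an odd position. *)
Lemma tm_square_double s P :
    tm s = 1 - tm P -> tm s.+1 = 1 - tm P ->
  forall i, i < 2 -> tm (s.*2.+1 + i) = tm (P.*2 + i).
Proof.
have := tm_binary P => P_bin tm_s tm_s1 [|[|]] // _.
- by rewrite !addn0 tm_odd tm_even tm_s; lia.
- by rewrite addn1 -doubleS tm_even tm_s1 addn1 tm_odd.
Qed.

Lemma span_attractor_square m S x : 7 <= m -> x <= 1 -> span_attractor 1 m S ->
  exists s, [/\ s \in S, s.+2 <= m, tm s = x & tm s.+1 = x].
Proof.
move=> m_ge x_le att; set p := if x == 0 then 5 else 1.
have [tm_p tm_p1] : tm p = x /\ tm p.+1 = x.
  by rewrite /p; case: x x_le {p att} => [|[]] //; rewrite !(tmE (j := 3)).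
have [|q [s [[q_le eq_q] sS qs sq]]] := att p 2 isT; first by rewrite /p; case: (x == 0); lia.
have q_eq : q = s by lia.
subst q; exists s; split => //; first lia.
- by have := eq_q 0 isT; rewrite !addn0 tm_p.
- by have := eq_q 1 isT; rewrite !addn1 tm_p1.
Qed.

Lemma span_attractor_double L R S : 7 <= L ->
    (forall m d, L <= m <= R -> d <= 1 -> span_attractor d m S) ->
  forall n d, L.*2 <= n <= R.*2 -> d <= 1 -> span_attractor d n [seq s.*2.+1 | s <- S].
Proof.
move=> L_ge att n d n_bds d_le p l l_gt pl_le.
have := odd_double_half p; move: (odd p) (p./2) => b P p_eq.
have : p + l + odd (p + l) = (uphalf (p + l)).*2.
  by rewrite uphalf_half; have := odd_double_half (p + l); lia.
move: (odd (p + l)) (uphalf (p + l)) => c Q pl_eq.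
have := odd_double_half (n + c); move: (odd (n + c)) ((n + c)./2) => r m n_eq.
have m_bds : L <= m <= R by lia.
(* p = 2P + b and p + l + c = 2Q: t[p..p+l) lies in mu(t[P..Q)), a factor of t[0..m); an
   occurrence of t[P..Q) through s, ..., s + max(d, c) maps to one through 2s+1, ..., 2s+1+d. *)
case: (ltnP (maxn d c) (Q - P)) => [k_gt | k_le].
- have [q [s [occ sS qs sd]]] :
      exists q s, [/\ tm_occurrence m q P (Q - P), s \in S, q <= s & s + maxn d c < q + (Q - P)].
    by apply: att; lia.
  exists (q.*2 + b), s.*2.+1; split; [|exact: map_f|lia|lia].
  by rewrite -p_eq [b + _]addnC; apply: (tm_occurrence_double (c := c) occ); lia.
- (* The parent is the single letter t[P], and t[p..p+l) is a prefix of mu(t[P]). *)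
  have [s [sS s_le tm_s tm_s1]] :
      exists s, [/\ s \in S, s.+2 <= m, tm s = 1 - tm P & tm s.+1 = 1 - tm P].
    by apply: span_attractor_square; [lia | lia | apply: att].
  have [b0 l_le] : b = false /\ l <= 2 by lia.
  subst b; exists s.*2.+1, s.*2.+1; split; [split|exact: map_f|lia|lia]; first lia.
  by move=> i i_lt; rewrite -p_eq add0n; apply: tm_square_double; lia.
Qed.

Lemma span_attractor_scale L R S j : 7 <= L ->
    (forall m d, L <= m <= R -> d <= 1 -> span_attractor d m S) ->
  forall n d, L * 2 ^ j <= n <= R * 2 ^ j -> d <= 1 ->
    span_attractor d n [seq s.+1 * 2 ^ j - 1 | s <- S].
Proof.
move=> L_ge att; elim: j => [|j IH] n d n_bds d_le.
  rewrite (eq_map (g := id)) => [|s]; last by rewrite muln1 subn1.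
  by rewrite map_id; apply: att; lia.
have pow_gt0 : 0 < 2 ^ j by rewrite expn_gt0.
rewrite (eq_map (g := fun s => (s.+1 * 2 ^ j - 1).*2.+1)) => [|s]; last by rewrite expnS; lia.
rewrite (map_comp (fun s => s.*2.+1) (fun s => s.+1 * 2 ^ j - 1)).
apply: (span_attractor_double (L := L * 2 ^ j) (R := R * 2 ^ j)) => //; first lia.
by rewrite expnS in n_bds; lia.
Qed.

Lemma slice_tm_prefix n p l : p + l <= n ->
  slice (tm_prefix n) p l = mkseq (fun i => tm (p + i)) l.
Proof.
move=> pl_le; have size_drop_p : l <= size (drop p (tm_prefix n)) by rewrite size_drop size_mkseq; lia.
apply: (@eq_from_nth _ 0); rewrite size_takel ?size_mkseq // => i i_lt.
by rewrite nth_take // nth_drop !nth_mkseq //; lia.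
Qed.

(* [tm k] unfolds to mu^(k+1)(0), of length 2^(k+1): prefixes are computed from blocks. *)
Lemma tm_prefix_block n j : n <= 2 ^ j -> tm_prefix n = take n (tm_block j).
Proof.
move=> n_le; apply: (@eq_from_nth _ 0); rewrite size_mkseq ?size_takel ?size_tm_block // => i i_lt.
by rewrite nth_mkseq // nth_take // (tmE (j := j)) //; lia.
Qed.

Lemma tm_occurrenceE n q p l : p + l <= n ->
  tm_occurrence n q p l <-> q + l <= n /\ slice (tm_prefix n) q l = slice (tm_prefix n) p l.
Proof.
move=> pl_le; split=> [[ql_le eq_qp] | [ql_le eq_slice]]; split=> //.
  by rewrite !slice_tm_prefix //; apply/eq_in_map => i; rewrite mem_iota => /andP[_ /eq_qp].
move=> i i_lt; move/(congr1 (fun w => nth 0 w i)): eq_slice.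
by rewrite !slice_tm_prefix // !nth_mkseq.
Qed.

Lemma span_attractor0_string_attractor n S :
  span_attractor 0 n S -> is_string_attractor (tm_prefix n) [set i : 'I_n | val i \in S].
Proof.
move=> att p l l_gt pl_le; have [q [s [occ sS qs sq]]] := att p l l_gt pl_le.
have [ql_le eq_slice] := (tm_occurrenceE q pl_le).1 occ.
have s_lt : s < n by lia.
by exists q; split=> //; split=> //; exists (Ordinal s_lt); rewrite inE /=; split=> //; lia.
Qed.

Lemma card_set_val_in n S : uniq S -> all (fun s => s < n) S ->
  #|[set i : 'I_n | val i \in S]| = size S.
Proof.
move=> S_uniq S_lt; rewrite cardE -(size_map val); apply/perm_size/uniq_perm => //.
  by rewrite map_inj_uniq ?enum_uniq //; apply: val_inj.
move=> s; apply/mapP/idP => [[i] | sS]; first by rewrite mem_enum inE => iS ->.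
by exists (Ordinal (allP S_lt s sS)); rewrite ?mem_enum ?inE.
Qed.

Definition span_attractorb (d : nat) (w S : seq nat) : bool :=
  all (fun l => all (fun p =>
      has (fun q => (slice w q l == slice w p l) && has (fun s => (q <= s) && (s + d < q + l)) S)
        (iota 0 (size w - l).+1))
    (iota 0 (size w - l).+1)) (iota d.+1 (size w - d)).

Lemma span_attractorbP d n S : span_attractorb d (tm_prefix n) S -> span_attractor d n S.
Proof.
rewrite /span_attractorb size_mkseq => att p l l_gt pl_le.
have l_in : l \in iota d.+1 (n - d) by rewrite mem_iota; lia.
have p_in : p \in iota 0 (n - l).+1 by rewrite mem_iota; lia.
have /hasP [q] := allP (allP att l l_in) p p_in.
rewrite mem_iota => q_le /andP [/eqP eq_slice /hasP [s sS /andP [qs sd]]].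
by exists q, s; split=> //; apply/(tm_occurrenceE q pl_le); split=> //; lia.
Qed.

Definition span_family_checked (D L R : nat) (S : seq nat) : bool :=
  all (fun m => all (fun d => span_attractorb d (take m (tm_block 6)) S) (iota 0 D.+1))
    (iota L (R - L).+1).

Lemma span_family_checkedP D L R S : R <= 64 -> span_family_checked D L R S ->
  forall m d, L <= m <= R -> d <= D -> span_attractor d m S.
Proof.
move=> R_le checked m d m_bds d_le; apply: span_attractorbP.
rewrite (tm_prefix_block (j := 6)); last lia.
by apply: (allP (allP checked m _)); rewrite mem_iota; lia.
Qed.

Lemma tm_attractor_of_span n S : span_attractor 0 n S -> uniq S -> all (fun s => s < n) S ->
  exists S' : {set 'I_n}, is_string_attractor (tm_prefix n) S' /\ #|S'| = size S.
Proof.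
move=> att S_uniq S_lt; exists [set i : 'I_n | val i \in S].
by split; [apply: span_attractor0_string_attractor | apply: card_set_val_in].
Qed.

Lemma tm_attractor_scaled L R S j n : span_family_checked 1 L R S -> 7 <= L -> R <= 64 ->
    uniq S -> all (fun s => s < L) S -> L * 2 ^ j <= n <= R * 2 ^ j ->
  exists S' : {set 'I_n}, is_string_attractor (tm_prefix n) S' /\ #|S'| = size S.
Proof.
move=> checked L_ge R_le S_uniq S_lt n_bds; have pow_gt0 : 0 < 2 ^ j by rewrite expn_gt0.
rewrite -(size_map (fun s => s.+1 * 2 ^ j - 1)); apply: tm_attractor_of_span.
- exact: (span_attractor_scale L_ge (span_family_checkedP R_le checked)).
- by rewrite map_inj_uniq // => s t; move: (2 ^ j) pow_gt0 => x; nia.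
- by apply/allP => _ /mapP [s /(allP S_lt) s_lt ->]; move: (2 ^ j) pow_gt0 n_bds => x; nia.
Qed.

Section HittingSet.
Variable T : eqType.

Fixpoint has_hitting_set (k : nat) (cs : seq (seq T)) : bool :=
  if cs is c :: _ then
    if k is k'.+1 then has (fun x => has_hitting_set k' [seq c' <- cs | x \notin c']) c
    else false
  else true.

Lemma has_hitting_set_complete k cs (X : seq T) :
  size X <= k -> all (has (mem X)) cs -> has_hitting_set k cs.
Proof.
elim: k cs X => [|k IH] [|c cs] X //=; first by case: X => //= _ /andP [/hasP []].
move=> X_le /andP [/hasP [x xc xX] X_hits]; apply/hasP; exists x => //.
apply: (IH _ (rem x X)); first by rewrite size_rem //; lia.
rewrite xc /=; apply/allP => c' /[!mem_filter] /andP [xc' c'_in].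
have /hasP [y yc' yX] := allP X_hits c' c'_in.
by apply/hasP; exists y => //; apply: rem_mem => //; apply: contraNneq xc' => <-.
Qed.

End HittingSet.

Definition occurrence_cover (w u : seq nat) : seq nat :=
  let occs := [seq q <- iota 0 (size w - size u).+1 | slice w q (size u) == u] in
  [seq i <- iota 0 (size w) | has (fun q => q <= i < q + size u) occs].

Lemma size_slice w p l : p + l <= size w -> size (slice w p l) = l.
Proof. by move=> pl_le; rewrite size_takel // size_drop; lia. Qed.

Section StringAttractor.
Variables (n : nat) (w : seq nat) (S : {set 'I_n}).
Hypotheses (size_w : size w = n) (S_att : is_string_attractor w S).

Lemma string_attractor_hits_cover p l : 0 < l -> p + l <= n ->
  has (mem [seq val i | i <- enum S]) (occurrence_cover w (slice w p l)).
Proof.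
move=> l_gt pl_le; have [q [ql_le [eq_slice [i [iS qi]]]]] := S_att l_gt pl_le.
apply/hasP; exists (val i); last by apply: map_f; rewrite mem_enum.
rewrite mem_filter mem_iota size_w leq0n add0n ltn_ord !andbT size_slice ?size_w //.
by apply/hasP; exists q; rewrite // mem_filter mem_iota eq_slice eqxx; lia.
Qed.

Lemma string_attractor_card_gt k (cs : seq (seq nat)) :
    {in cs, forall c, exists p l, [/\ 0 < l, p + l <= n & c = occurrence_cover w (slice w p l)]} ->
  ~~ has_hitting_set k cs -> k < #|S|.
Proof.
move=> cs_covers; apply: contraNT; rewrite -leqNgt cardE => S_le.
apply: (has_hitting_set_complete (X := [seq val i | i <- enum S])); first by rewrite size_map.
by apply/allP => c /cs_covers [p [l [l_gt pl_le ->]]]; apply: string_attractor_hits_cover.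
Qed.

Lemma string_attractor_count_factors l ps : 0 < l -> all (fun p => p + l <= n) ps ->
  size (undup [seq slice w p l | p <- ps]) <= l * #|S|.
Proof.
move=> l_gt ps_le.
have -> : l * #|S| = size [seq slice w (i - j) l | i : 'I_n <- enum S, j : 'I_l <- enum 'I_l].
  by rewrite size_allpairs size_enum_ord cardE mulnC.
apply: uniq_leq_size => [|_ /[!mem_undup] /mapP [p /(allP ps_le) pl_le ->]]; first exact: undup_uniq.
have [q [ql_le [eq_slice [i [iS qi]]]]] := S_att l_gt pl_le.
have i_off : i - q < l by lia.
apply/allpairsP; exists (i, Ordinal i_off); rewrite !mem_enum /=; split=> //.
by have -> : i - (i - q) = q by lia.
Qed.

End StringAttractor.

(* Factors of length at most 6 already force every lower bound for n < 60.  Sorting puts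
   the smallest covers first, so that the search branches on few positions. *)
Definition short_factor_covers (w : seq nat) : seq (seq nat) :=
  sort (fun c c' => size c <= size c') [seq occurrence_cover w u | u <-
    undup [seq slice w p l | l <- iota 1 (minn 6 (size w)), p <- iota 0 (size w - l).+1]].

Lemma short_factor_coversP w c : c \in short_factor_covers w ->
  exists p l, [/\ 0 < l, p + l <= size w & c = occurrence_cover w (slice w p l)].
Proof.
rewrite mem_sort => /mapP [_ /[!mem_undup] /allpairsPdep [l [p [l_in p_in ->]]] ->].
by exists p, l; move: l_in p_in; rewrite !mem_iota; split=> //; lia.
Qed.

Definition small_attractor (n : nat) : seq nat :=
  if n <= 1 then [:: 0] else if n <= 3 then [:: 0; 1] else if n <= 6 then [:: 1; 3]
  else if n <= 10 then [:: 0; 2; 5] else if n <= 14 then [:: 3; 7; 10]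
  else if n <= 16 then [:: 1; 5; 7; 11] else if n <= 20 then [:: 5; 9; 13]
  else if n <= 24 then [:: 7; 13; 17] else [:: 5; 7; 13; 19].

Lemma small_attractors_checked : all (fun n => let S := small_attractor n in
    [&& span_attractorb 0 (take n (tm_block 6)) S, uniq S, all (fun s => s < n) S
      & size S == a_claimed n]) (iota 1 25).
Proof. by vm_compute. Qed.

Lemma large_families_checked :
  [&& span_family_checked 1 26 40 [:: 7; 11; 15; 23], span_family_checked 1 36 48 [:: 11; 15; 23; 31]
    & span_family_checked 1 48 52 [:: 11; 15; 31; 39]].
Proof. by vm_compute. Qed.

Lemma lower_bounds_checked : all (fun n =>
    ~~ has_hitting_set (a_claimed n).-1 (short_factor_covers (take n (tm_block 6)))) (iota 1 59).
Proof. by vm_compute. Qed.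

Lemma distinct_factors13_checked :
  size (undup [seq slice (take 64 (tm_block 6)) p 13 | p <- iota 0 48]) = 40.
Proof. by vm_compute. Qed.

Lemma exists_scale L n : 0 < L -> L <= n -> exists j, L * 2 ^ j <= n < L.*2 * 2 ^ j.
Proof.
move=> L_gt L_le; exists (trunc_log 2 (n %/ L)).
have q_gt : 0 < n %/ L by rewrite divn_gt0.
have := trunc_logP (isT : 1 < 2) q_gt; have := trunc_log_ltn (n %/ L) (isT : 1 < 2).
by rewrite expnS; move: (2 ^ _) => x; nia.
Qed.

Lemma a_claimed_ge25 n : 25 <= n -> a_claimed n = 4.
Proof. by move=> n_ge; rewrite /a_claimed !ifN //; lia. Qed.

Lemma tm_attractor_upper_small n : 1 <= n <= 25 ->
  exists S : {set 'I_n}, is_string_attractor (tm_prefix n) S /\ #|S| = a_claimed n.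
Proof.
move=> n_bds; have n_in : n \in iota 1 25 by rewrite mem_iota; lia.
have /and4P [att S_uniq S_lt /eqP <-] := allP small_attractors_checked n n_in.
apply: tm_attractor_of_span => //; apply: span_attractorbP.
by rewrite (tm_prefix_block (j := 6)) //; lia.
Qed.

Lemma tm_attractor_upper_large n : 26 <= n ->
  exists S : {set 'I_n}, is_string_attractor (tm_prefix n) S /\ #|S| = 4.
Proof.
move=> n_ge; have [j n_bds] := exists_scale (isT : 0 < 26) n_ge.
have /and3P [famA famB famC] := large_families_checked.
have [n_le | n_gt] := leqP n (40 * 2 ^ j).
  by apply: (tm_attractor_scaled (j := j) famA isT isT isT isT); lia.
have [n_le' | n_gt'] := leqP n (48 * 2 ^ j).
  by apply: (tm_attractor_scaled (j := j) famB isT isT isT isT); lia.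
by apply: (tm_attractor_scaled (j := j) famC isT isT isT isT); lia.
Qed.

Lemma tm_attractor_lower_small n (S : {set 'I_n}) : 1 <= n <= 59 ->
  is_string_attractor (tm_prefix n) S -> a_claimed n <= #|S|.
Proof.
move=> n_bds S_att; have n_in : n \in iota 1 59 by rewrite mem_iota; lia.
have := allP lower_bounds_checked n n_in; rewrite -tm_prefix_block; last lia.
move/(string_attractor_card_gt (size_mkseq _ _) S_att); case: (a_claimed n) => // k; apply.
by move=> c /short_factor_coversP; rewrite size_mkseq.
Qed.

Lemma tm_attractor_lower_large n (S : {set 'I_n}) : 60 <= n ->
  is_string_attractor (tm_prefix n) S -> 4 <= #|S|.
Proof.
move=> n_ge S_att.
have ps_le : all (fun p => p + 13 <= n) (iota 0 48) by apply/allP => p; rewrite mem_iota; lia.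
have := string_attractor_count_factors (size_mkseq _ _) S_att (isT : 0 < 13) ps_le.
have -> : [seq slice (tm_prefix n) p 13 | p <- iota 0 48] =
          [seq slice (take 64 (tm_block 6)) p 13 | p <- iota 0 48].
  apply/eq_in_map => p; rewrite mem_iota -tm_prefix_block // => p_lt.
  by rewrite !slice_tm_prefix //; lia.
by rewrite distinct_factors13_checked; lia.
Qed.

Unset Implicit Arguments.

Theorem theorem5 (n : nat) : 1 <= n ->
  (exists S : {set 'I_n}, is_string_attractor (tm_prefix n) S /\ #|S| = a_claimed n) /\
  (forall S : {set 'I_n}, is_string_attractor (tm_prefix n) S -> a_claimed n <= #|S|).
Proof.
move=> n_gt0; split=> [|S S_att].
- have [n_le | n_gt] := leqP n 25; first by apply: tm_attractor_upper_small; lia.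
  by rewrite a_claimed_ge25 //; [apply: tm_attractor_upper_large | lia].
- have [n_le | n_gt] := leqP n 59; first by apply: tm_attractor_lower_small => //; lia.
  by rewrite a_claimed_ge25 //; [apply: tm_attractor_lower_large | lia].
Qed.
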